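(* If a black-white array (BWA) stores exactly $n=2^m$ values, then searching for a value in it takes $O(\log n)$ time, whether or not the value is present.
   Context: A black-white array (BWA) of size $N=2^K$ stores values from a totally ordered set. Its white array is $W[1..N-1]$. For $i\ge0$, the segment of rank $i$ is the index block $[2^i,2^{i+1}-1]$. A state variable $\mathtt{total}$ counts stored values. The rank-$i$ segment is active iff bit $i$ of $\mathtt{total}$ is $1$. Between operations, all stored values lie in the active white segments, each sorted ascending. Search$(v)$: for $i=K-1$ down to $0$, if the rank-$i$ segment is active, binary-search the white rank-$i$ segment for $v$. A binary search of a segment of length $L$ costs $O(\log L+1)$. Return the index at the first success, or Nil if no active segment contains $v$. *)

From mathcomp Require Import all_boot all_order.
Set Implicit Arguments. Unset Strict Implicit. Unset Printing Implicit Defensive.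
Import Order.TTheory.

(* rank-i segment [2^i, 2^(i+1)-1] is active iff bit i of total is 1 *)
Definition seg_active (total i : nat) : bool := odd (total %/ 2 ^ i).

Definition bwa_sorted (d : Order.disp_t) (T : orderType d) (W : nat -> T) (total : nat) : Prop :=
  forall i j, seg_active total i -> 2 ^ i <= j -> j.+1 <= 2 ^ i.+1 - 1 ->
    (W j <= W j.+1)%O.

(* Search(v): scan ranks i = K-1 down to 0; for each active segment run a
   binary search [bsearch W lo L v] on W[lo .. lo+L-1] (lo = L = 2^i) whose
   cost is [bcost W lo L v]; stop at the first success. *)
Fixpoint bwa_search_scan (T : Type)
    (bsearch : (nat -> T) -> nat -> nat -> T -> option nat)
    (bcost : (nat -> T) -> nat -> nat -> T -> nat)
    (W : nat -> T) (total : nat) (v : T) (ranks : seq nat) : option nat * nat :=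
  match ranks with
  | [::] => (None, 0)
  | i :: rs =>
    if seg_active total i then
      match bsearch W (2 ^ i) (2 ^ i) v with
      | Some j => (Some j, bcost W (2 ^ i) (2 ^ i) v)
      | None => let r := bwa_search_scan bsearch bcost W total v rs in
                (r.1, bcost W (2 ^ i) (2 ^ i) v + r.2)
      end
    else bwa_search_scan bsearch bcost W total v rs
  end.

Definition bwa_search (T : Type)
    (bsearch : (nat -> T) -> nat -> nat -> T -> option nat)
    (bcost : (nat -> T) -> nat -> nat -> T -> nat)
    (K : nat) (W : nat -> T) (total : nat) (v : T) : option nat * nat :=
  bwa_search_scan bsearch bcost W total v (rev (iota 0 K)).

From mathcomp Require Import all_boot all_order.
Set Implicit Arguments. Unset Strict Implicit. Unset Printing Implicit Defensive.

(* When the BWA holds exactly 2^m values, the binary expansion of the count has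
   a single 1-bit, so the only active segment is the one of rank m, of length
   2^m.  A search therefore performs at most one binary search, on a segment of
   length n = 2^m, whose cost is O(log n). *)

Lemma seg_active_pow2 m i : seg_active (2 ^ m) i = (i == m).
Proof.
rewrite /seg_active; case: (ltngtP i m) => [lt_im | lt_mi | ->].
- rewrite -(subnK (ltnW lt_im)) expnD mulnK ?expn_gt0 //.
  by rewrite -(subnSK lt_im) expnS oddM.
- by rewrite divn_small // ltn_exp2l.
- by rewrite divnn expn_gt0.
Qed.

Lemma bwa_search_scan_cost_le (T : Type)
    (bsearch : (nat -> T) -> nat -> nat -> T -> option nat)
    (bcost : (nat -> T) -> nat -> nat -> T -> nat)
    (W : nat -> T) (total : nat) (v : T) (ranks : seq nat) :
  (bwa_search_scan bsearch bcost W total v ranks).2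
    <= \sum_(i <- ranks | seg_active total i) bcost W (2 ^ i) (2 ^ i) v.
Proof.
elim: ranks => [|i ranks IH] /=; first by rewrite big_nil.
rewrite big_cons; case: ifP => // _.
by case: (bsearch W _ _ v) => [j|] /=; [exact: leq_addr | rewrite leq_add2l].
Qed.

Lemma sum_pred1_uniq_le (r : seq nat) (m : nat) (F : nat -> nat) :
  uniq r -> \sum_(i <- r | i == m) F i <= F m.
Proof.
move=> uniq_r; rewrite (eq_bigr (fun=> F m)) => [|i /eqP -> //].
by rewrite big_const_seq count_uniq_mem //; case: (m \in r) => /=; rewrite ?addn0.
Qed.

Theorem mainTheorem8 (d : Order.disp_t) (T : orderType d)
    (bsearch : (nat -> T) -> nat -> nat -> T -> option nat)
    (bcost : (nat -> T) -> nat -> nat -> T -> nat) (c : nat)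
    (hbs : forall W lo L v, bcost W lo L v <= c * (trunc_log 2 L + 1)) :
  exists C : nat, forall (K m : nat) (W : nat -> T) (v : T),
    2 ^ m <= 2 ^ K - 1 ->
    bwa_sorted W (2 ^ m) ->
    (bwa_search bsearch bcost K W (2 ^ m) v).2 <= C * (trunc_log 2 (2 ^ m) + 1).
Proof.
exists c => K m W v _ _.
rewrite /bwa_search; apply: leq_trans (bwa_search_scan_cost_le _ _ _ _ _ _) _.
rewrite (eq_bigl _ _ (seg_active_pow2 m)).
apply: leq_trans (hbs W (2 ^ m) (2 ^ m) v); apply: sum_pred1_uniq_le.
by rewrite rev_uniq iota_uniq.
Qed.
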